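(* Let $\mathcal{A}=(\{1,\dots,k\},\sqsubseteq,<)$ be a finite linearly ordered poset where $<$ is the usual order of integers. Let $D_1,\dots,D_m$ be all the nonempty downsets of $(\{1,\dots,k\},\sqsubseteq)$, enumerated so that $D_1<_{\mathit{alex}}D_2<_{\mathit{alex}}\dots<_{\mathit{alex}}D_m$. Let $n\ge m$ and let $u\in W^n_m(\{0\})$ be an $m$-parameter word of length $n$ over the alphabet $\{0\}$; put $X_\alpha=u^{-1}(x_\alpha)$ for $1\le\alpha\le m$, and $a_i=\bigcup\{X_\alpha: i\in D_\alpha\}$ for $1\le i\le k$. Then the map $i\mapsto a_i$ is an embedding of $\mathcal{A}$ into the linearly ordered poset $(\mathcal{P}(\{1,\dots,n\}),\supseteq,<_{\overline{\mathit{lex}}})$; that is, it is injective, $i\sqsubseteq j\iff a_i\supseteq a_j$, and $i<j\iff a_i<_{\overline{\mathit{lex}}}a_j$.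
   Context: A downset in $(A,\sqsubseteq)$ is a set $B\subseteq A$ such that $x\in B$, $y\sqsubseteq x$ imply $y\in B$. For a finite linearly ordered set $(L,<)$ and $A,B\subseteq L$: $A<_{\mathit{alex}}B$ iff $A\subsetneq B$, or $A,B$ are $\subseteq$-incomparable and $\max(A\setminus B)<\max(B\setminus A)$; $A<_{\overline{\mathit{lex}}}B$ iff $A\supsetneq B$, or $A,B$ are incomparable and $\min(A\setminus B)<\min(B\setminus A)$. Both are linear orders on $\mathcal{P}(L)$. With variables $x_1,x_2,\dots$ disjoint from a finite alphabet $A$, an $m$-parameter word of length $n$ over $A$ is a word $w\in(A\cup\{x_1,\dots,x_m\})^n$, viewed as a map $w:\{1,\dots,n\}\to A\cup\{x_1,\dots,x_m\}$, such that each $x_1,\dots,x_m$ occurs in $w$ and $\min w^{-1}(x_i)<\min w^{-1}(x_j)$ for $1\le i<j\le m$; $W^n_m(A)$ is the set of such words. A linearly ordered poset is $(A,\sqsubseteq,<)$ with $(A,\sqsubseteq)$ a poset and $<$ a linear order extending $\sqsubseteq$; an embedding is an injection preserving and reflecting both $\sqsubseteq$ and $<$. *)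

From mathcomp Require Import all_boot all_order.
Set Implicit Arguments. Unset Strict Implicit. Unset Printing Implicit Defensive.

(* Convention: the ground sets {1,...,k} and {1,...,n} are represented by
   'I_k = {0,...,k-1} and 'I_n = {0,...,n-1} (shift by one, order-preserving). *)

(* max / min (as natural numbers) of a set of ordinals; only used on nonempty
   sets, where they are the genuine maximum / minimum. *)
Definition setmax (n : nat) (S : {set 'I_n}) : nat := \max_(i in S) val i.
Definition setmin (n : nat) (S : {set 'I_n}) : nat := \big[minn/n]_(i in S) val i.

Definition alex_lt (n : nat) (A B : {set 'I_n}) : bool :=
  (A \proper B) ||
  [&& ~~ (A \subset B), ~~ (B \subset A) & setmax (A :\: B) < setmax (B :\: A)].

Definition lexbar_lt (n : nat) (A B : {set 'I_n}) : bool :=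
  (B \proper A) ||
  [&& ~~ (A \subset B), ~~ (B \subset A) & setmin (A :\: B) < setmin (B :\: A)].

Definition is_poset (k : nat) (le : rel 'I_k) : Prop :=
  [/\ reflexive le, antisymmetric le & transitive le].

Definition extends_order (k : nat) (le : rel 'I_k) : Prop :=
  forall i j : 'I_k, le i j -> (val i <= val j)%N.

Definition is_downset (k : nat) (le : rel 'I_k) (B : {set 'I_k}) : Prop :=
  forall x y : 'I_k, x \in B -> le y x -> y \in B.

(* letters of a parameter word over the alphabet {0}: None = 0, Some a = x_(a+1) *)
Definition param_var (n m : nat) (u : 'I_n -> option 'I_m) (a : 'I_m) : {set 'I_n} :=
  [set i | u i == Some a].

Definition is_param_word (n m : nat) (u : 'I_n -> option 'I_m) : Prop :=
  (forall a : 'I_m, exists i : 'I_n, u i = Some a) /\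
  (forall a b : 'I_m, val a < val b ->
     setmin (param_var u a) < setmin (param_var u b)).

From mathcomp Require Import all_boot all_order.
Import Order.TTheory.

Set Implicit Arguments.
Unset Strict Implicit.
Unset Printing Implicit Defensive.

(* Every principal downset [set y | le y i] is some D al, and its block
   X_al = u^-1(x_al) lies in a_j exactly when le j i; this gives the order
   embedding.  For i < j incomparable, a_j \ a_i only meets blocks X_be with
   j in D be and i notin D be, and such a D be cannot be alex-below
   [set y | le y i], whose elements are all <= i < j.  Hence al < be, so X_al
   starts before X_be and min (a_i \ a_j) <= min X_al < min (a_j \ a_i). *)

Lemma setmin_le n (S : {set 'I_n}) (x : 'I_n) : x \in S -> setmin S <= val x.
Proof. exact: (bigmin_le_cond n (P := mem S) (fun i : 'I_n => val i)). Qed.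

Lemma setmin_sub n (A B : {set 'I_n}) : A \subset B -> setmin B <= setmin A.
Proof.
move=> /subsetP AB; rewrite /setmin -!minEnat.
apply: (@le_bigmin _ nat) => [|i /AB]; last exact: bigmin_le_cond.
exact: bigmin_le_id.
Qed.

Lemma setmin_gt n (S : {set 'I_n}) c :
  c < n -> (forall x, x \in S -> c < val x) -> c < setmin S.
Proof. by move=> c_lt_n S_gt; rewrite /setmin -minEnat; exact: (@lt_bigmin _ nat). Qed.

Lemma lexbar_ltxx n (A : {set 'I_n}) : ~~ lexbar_lt A A.
Proof. by rewrite /lexbar_lt properE subxx. Qed.

Lemma lexbar_lt_asym n (A B : {set 'I_n}) :
  lexbar_lt A B -> lexbar_lt B A -> False.
Proof.
rewrite /lexbar_lt => /orP[BA|/and3P[nAB _ ltAB]] /orP[AB|/and3P[nBA _ ltBA]].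
- by move: (proper_subn BA); rewrite (proper_sub AB).
- by rewrite (proper_sub BA) in nBA.
- by rewrite (proper_sub AB) in nAB.
- by move: (ltn_trans ltAB ltBA); rewrite ltnn.
Qed.

Lemma alex_lt_exists_gt {n} {A B : {set 'I_n}} {y : 'I_n} :
  alex_lt A B -> y \in A :\: B -> exists2 z, z \in B :\: A & val y < val z.
Proof.
move=> + yAB; rewrite /alex_lt => /orP[/proper_sub|/and3P[_ BA lt_max]].
  by rewrite -setD_eq0 => /eqP AB0; rewrite AB0 inE in yAB.
have [|z zBA max_z] := eq_bigmax_cond (fun i : 'I_n => val i) (A := mem (B :\: A)).
  by rewrite card_gt0 setD_eq0.
exists z => //; rewrite -max_z; apply: leq_ltn_trans lt_max.
exact: (leq_bigmax_cond (P := mem (A :\: B))).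
Qed.

Section DownsetEmbedding.

Variables (k : nat) (le : rel 'I_k).
Hypotheses (le_reflexive : reflexive le) (le_antisym : antisymmetric le).
Hypothesis le_transitive : transitive le.
Hypothesis le_val : extends_order le.

Variables (m : nat) (D : 'I_m -> {set 'I_k}).
Hypothesis D_downset : forall al, is_downset le (D al).
Hypothesis D_complete : forall B : {set 'I_k}, B != set0 -> is_downset le B ->
  exists al : 'I_m, D al = B.
Hypothesis D_alex_sorted : forall {al be : 'I_m},
  val al < val be -> alex_lt (D al) (D be).

Variables (n : nat) (u : 'I_n -> option 'I_m).
Hypothesis u_onto : forall al : 'I_m, exists x : 'I_n, u x = Some al.
Hypothesis u_sorted : forall {al be : 'I_m}, val al < val be ->
  setmin (param_var u al) < setmin (param_var u be).

Definition downset_union (i : 'I_k) : {set 'I_n} :=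
  \bigcup_(al : 'I_m | i \in D al) param_var u al.

Lemma mem_downset_union i {x al} :
  u x = Some al -> (x \in downset_union i) = (i \in D al).
Proof.
move=> ux; apply/bigcupP/idP => [[be iDbe]|iDal]; last by exists al; rewrite // inE ux.
by rewrite inE ux => /eqP[->].
Qed.

Lemma principal_downset_index i : exists al, D al = [set y | le y i].
Proof.
apply: D_complete; first by apply/set0Pn; exists i; rewrite inE le_reflexive.
by move=> x y; rewrite !inE => xi yx; apply: le_transitive xi.
Qed.

Lemma downset_unionP i x :
  x \in downset_union i -> exists2 al, u x = Some al & i \in D al.
Proof. by case/bigcupP=> al iDal; rewrite inE => /eqP ux; exists al. Qed.

Lemma le_downset_union_sub i j : le i j = (downset_union j \subset downset_union i).
Proof.
apply/idP/idP=> [le_ij|sub_ji].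
  apply/subsetP => x /downset_unionP[al ux jDal].
  by rewrite (mem_downset_union _ ux); apply: D_downset le_ij.
have [al Dal] := principal_downset_index j; have [x ux] := u_onto al.
have := subsetP sub_ji x; rewrite !(mem_downset_union _ ux) Dal !inE.
by apply; apply: le_reflexive.
Qed.

Lemma downset_union_inj : injective downset_union.
Proof.
by move=> i j eq_ij; apply: le_antisym; rewrite !(le_downset_union_sub, eq_ij, subxx).
Qed.

Lemma principal_index_lt {i j al be} : val i < val j ->
  D al = [set y | le y i] -> j \in D be -> i \notin D be -> val al < val be.
Proof.
move=> lt_ij Dal jDbe iDbe; have not_le_ji : ~~ le j i.
  by apply: contraTN lt_ij => /le_val; rewrite leqNgt.
case: ltngtP => // [lt_be_al|/val_inj eq_al_be].
  have j_diff : j \in D be :\: D al by rewrite inE jDbe Dal inE not_le_ji.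
  have [z] := alex_lt_exists_gt (D_alex_sorted lt_be_al) j_diff.
  rewrite inE Dal inE => /andP[_ /le_val le_zi] lt_jz.
  by move: (leq_trans lt_jz le_zi); rewrite ltnNge (ltnW lt_ij).
by move: iDbe; rewrite -eq_al_be Dal inE le_reflexive.
Qed.

Lemma lt_lexbar_downset_union i j :
  val i < val j -> lexbar_lt (downset_union i) (downset_union j).
Proof.
move=> lt_ij; have not_le_ji : ~~ le j i.
  by apply: contraTN lt_ij => /le_val; rewrite leqNgt.
case le_ij: (le i j).
  apply/orP; left; rewrite properEneq -le_downset_union_sub le_ij andbT.
  by apply: contraTneq lt_ij => /downset_union_inj ->; rewrite ltnn.
apply/orP; right; rewrite -!le_downset_union_sub le_ij (negbTE not_le_ji) /=.
have [al Dal] := principal_downset_index i; have [x0 ux0] := u_onto al.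
have X_al (x : 'I_n) : x \in param_var u al -> u x = Some al by rewrite inE => /eqP.
apply: (@leq_ltn_trans (setmin (param_var u al))).
  apply/setmin_sub/subsetP => x /X_al ux.
  by rewrite inE !(mem_downset_union _ ux) Dal !inE not_le_ji le_reflexive.
apply: setmin_gt => [|y].
  by apply: leq_ltn_trans (ltn_ord x0); apply: setmin_le; rewrite inE ux0.
rewrite inE => /andP[Ai /downset_unionP[be uy jDbe]].
rewrite (mem_downset_union _ uy) in Ai.
apply: leq_trans (u_sorted (principal_index_lt lt_ij Dal jDbe Ai)) _.
by apply: setmin_le; rewrite inE uy.
Qed.

End DownsetEmbedding.

Theorem mainTheorem4 (k : nat) (le : rel 'I_k)
  (Hposet : is_poset le) (Hlin : extends_order le)
  (m : nat) (D : 'I_m -> {set 'I_k})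
  (HDdown : forall a : 'I_m, D a != set0 /\ is_downset le (D a))
  (HDall : forall B : {set 'I_k}, B != set0 -> is_downset le B ->
             exists a : 'I_m, D a = B)
  (HDord : forall a b : 'I_m, val a < val b -> alex_lt (D a) (D b))
  (n : nat) (Hnm : m <= n)
  (u : 'I_n -> option 'I_m) (Hu : is_param_word u) :
  let a := fun i : 'I_k => \bigcup_(al : 'I_m | i \in D al) param_var u al in
  [/\ injective a,
      (forall i j : 'I_k, le i j <-> a j \subset a i) &
      (forall i j : 'I_k, val i < val j <-> lexbar_lt (a i) (a j))].
Proof.
move=> a; case: Hposet => le_reflexive le_antisym le_transitive.
case: Hu => u_onto u_sorted.
have D_downset al : is_downset le (D al) by case: (HDdown al).
have lt_lexbar := lt_lexbar_downset_union le_reflexive le_antisym le_transitive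
  Hlin D_downset HDall HDord u_onto u_sorted.
split=> [|i j|i j].
- exact (downset_union_inj le_reflexive le_antisym le_transitive D_downset HDall u_onto).
- by rewrite (le_downset_union_sub le_reflexive le_transitive D_downset HDall u_onto).
- split=> [|lex_ij]; first exact: lt_lexbar.
  case: ltngtP => // [lt_ji|/val_inj eq_ij].
    by case: (lexbar_lt_asym lex_ij (lt_lexbar _ _ lt_ji)).
  by move: lex_ij; rewrite eq_ij (negbTE (lexbar_ltxx _)).
Qed.
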